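(* Under the standing assumptions (A) below, let $\Omega'=\{t\in[0,L]:\tau(t)\ne\pm\lambda\}\cup\Omega$. Then $\Omega'\setminus\Omega$ is a discrete set.
   Context: Standing assumptions (A): $n\ge2$, $L>0$, $\beta\colon[0,L]\to(0,\infty)$ of bounded variation with $1/\beta$ bounded; $\tau\in W^{1,\infty}((0,L);S^{n-1})$ with $k=\operatorname{ess\,sup}|\tau'|>0$; $\lambda\in S^{n-1}$ and $u\in W^{1,\infty}((0,L);\mathbb{R}^n)\setminus\{0\}$ such that $u'+(u\cdot\tau')\tau=\beta(\lambda-(\lambda\cdot\tau)\tau)$ and $|u|\tau'=ku$ a.e. in $(0,L)$; $f=k|u|$, which then satisfies $f'=\beta\,\lambda\cdot\tau'$ and $f(\tau''+k^2\tau)=\beta k^2\,\mathrm{proj}^\perp_{\tau,\tau'}(\lambda)$ weakly in $(0,L)$ (where $\mathrm{proj}^\perp_{V,W}$ is the orthogonal projection onto the orthogonal complement of $\mathrm{span}\{V,W\}$); $\Omega=\{t\in[0,L]:f(t)>0\}$ (open relative to $[0,L]$); and $\tau(t),\tau'(t),\lambda$ are linearly dependent for every $t\in\Omega$ (note $\tau'$ is continuous on $\Omega$). *)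

From Stdlib Require Import Reals Lra List.
Open Scope R_scope.

(* Vectors of R^n are represented as functions nat -> R; only the
   components with index i < n are meaningful. *)
Definition Vec := nat -> R.

Fixpoint vsum (n : nat) (f : nat -> R) : R :=
  match n with O => 0 | S m => vsum m f + f m end.

Definition dot (n : nat) (x y : Vec) : R := vsum n (fun i => x i * y i).
Definition vnorm (n : nat) (x : Vec) : R := sqrt (dot n x x).

Definition on_sphere (n : nat) (x : Vec) : Prop := vnorm n x = 1.

Definition lin_dep3 (n : nat) (x y z : Vec) : Prop :=
  exists a b c : R, (a <> 0 \/ b <> 0 \/ c <> 0) /\
    forall i, (i < n)%nat -> a * x i + b * y i + c * z i = 0.

Definition null_set (A : R -> Prop) : Prop :=
  forall eps, 0 < eps ->
    exists a b : nat -> R,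
      (forall j, a j <= b j) /\
      (forall t, A t -> exists j, a j < t < b j) /\
      (forall N, sum_f_R0 (fun j => b j - a j) N <= eps).

Definition ae_on (L : R) (P : R -> Prop) : Prop :=
  null_set (fun t => 0 < t < L /\ ~ P t).

Definition is_ess_sup (L : R) (g : R -> R) (k : R) : Prop :=
  ae_on L (fun t => g t <= k) /\
  forall c, c < k -> ~ null_set (fun t => 0 < t < L /\ c < g t).

(* Lipschitz on [0,L] (= W^{1,infty}((0,L)) up to the continuous representative) *)
Definition lipschitz_on (n : nat) (L : R) (x : R -> Vec) : Prop :=
  exists M, forall s t i, 0 <= s <= L -> 0 <= t <= L -> (i < n)%nat ->
    Rabs (x s i - x t i) <= M * Rabs (s - t).

Definition vderiv_at (n : nat) (x : R -> Vec) (t : R) (D : Vec) : Prop :=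
  forall i, (i < n)%nat -> derivable_pt_lim (fun s => x s i) t (D i).

Definition vderiv_within (n : nat) (L : R) (x : R -> Vec) (t : R) (D : Vec) : Prop :=
  forall i, (i < n)%nat ->
    forall eps, 0 < eps -> exists delta, 0 < delta /\
      forall h, h <> 0 -> Rabs h < delta -> 0 <= t + h <= L ->
        Rabs ((x (t + h) i - x t i) / h - D i) < eps.

Fixpoint var_sum (b : R -> R) (l : list R) : R :=
  match l with
  | x :: ((y :: _) as r) => Rabs (b y - b x) + var_sum b r
  | _ => 0
  end.

Fixpoint increasing_list (l : list R) : Prop :=
  match l with
  | x :: ((y :: _) as r) => x <= y /\ increasing_list r
  | _ => True
  end.

Definition bounded_variation (L : R) (b : R -> R) : Prop :=
  exists M, forall l : list R, increasing_list l ->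
    (forall x, In x l -> 0 <= x <= L) -> var_sum b l <= M.

Definition discrete_set (S : R -> Prop) : Prop :=
  forall t, S t -> exists delta, 0 < delta /\
    forall s, S s -> Rabs (s - t) < delta -> s = t.

Definition f_of (n : nat) (k : R) (u : R -> Vec) (t : R) : R := k * vnorm n (u t).

Definition Omega (n : nat) (L k : R) (u : R -> Vec) (t : R) : Prop :=
  0 <= t <= L /\ 0 < f_of n k u t.

Definition vec_neq (n : nat) (x y : Vec) : Prop := exists i, (i < n)%nat /\ x i <> y i.

Definition Omega' (n : nat) (L k : R) (tau u : R -> Vec) (lam : Vec) (t : R) : Prop :=
  (0 <= t <= L /\ vec_neq n (tau t) lam /\ vec_neq n (tau t) (fun i => - lam i))
  \/ Omega n L k u t.

From Stdlib Require Import Reals Lra Lia List Classical.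
Open Scope R_scope.

(* At a point t0 of Omega' \ Omega we have u(t0) = 0 and tau(t0) <> +-lam, so
   some component w = (lam - (lam.tau(t0)) tau(t0))_i is nonzero.  Near t0 the
   ODE  u' + (u.tau') tau = beta (lam - (lam.tau) tau)  gives, at almost every
   point, w u_i' >= b0 w^2 / 4 > 0: the coupling term u.tau' is O(|t - t0|)
   because u is Lipschitz and vanishes at t0, while beta is bounded below.  A
   Lipschitz function with derivative bounded below by a positive constant off
   a null set is strictly increasing, so w u_i has no second zero near t0; as
   u vanishes on all of Omega' \ Omega, t0 is isolated there. *)

Lemma sum_f_R0_term_le (f : nat -> R) (N j : nat) :
  (forall i, 0 <= f i) -> (j <= N)%nat -> f j <= sum_f_R0 f N.
Proof.
  intros Hf Hj; induction N as [|N IH].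
  - replace j with 0%nat by lia; simpl; lra.
  - simpl; destruct (Nat.eq_dec j (S N)) as [->|Hne].
    + pose proof (cond_pos_sum f N Hf); lra.
    + specialize (IH ltac:(lia)); specialize (Hf (S N)); lra.
Qed.

Lemma sum_f_R0_mono_N (f : nat -> R) (N N' : nat) :
  (forall i, 0 <= f i) -> (N <= N')%nat -> sum_f_R0 f N <= sum_f_R0 f N'.
Proof.
  intros Hf H; induction H as [|N' _ IH]; [lra|].
  simpl; specialize (Hf (S N')); lra.
Qed.

(* Interleaving of two sequences: even indices read [f], odd ones read [g].
   It turns two countable covers into one. *)
Definition interleave (f g : nat -> R) (j : nat) : R :=
  if Nat.even j then f (Nat.div2 j) else g (Nat.div2 j).

Lemma interleave_even (f g : nat -> R) (j : nat) : interleave f g (2 * j) = f j.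
Proof. unfold interleave; rewrite Nat.even_even, Nat.div2_even; reflexivity. Qed.

Lemma interleave_odd (f g : nat -> R) (j : nat) : interleave f g (2 * j + 1) = g j.
Proof.
  unfold interleave; replace (2 * j + 1)%nat with (S (2 * j)) by lia.
  rewrite Nat.even_succ, Nat.odd_mul, Nat.div2_succ_double; reflexivity.
Qed.

Lemma sum_interleave (f g : nat -> R) (N : nat) :
  sum_f_R0 (interleave f g) (2 * N + 1) = sum_f_R0 f N + sum_f_R0 g N.
Proof.
  induction N as [|N IH].
  - reflexivity.
  - replace (2 * S N + 1)%nat with (S (S (2 * N + 1))) by lia.
    rewrite !tech5, IH.
    replace (S (2 * N + 1)) with (2 * S N)%nat by lia.
    replace (S (2 * S N)) with (2 * S N + 1)%nat by lia.
    rewrite interleave_even, interleave_odd; simpl; ring.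
Qed.

Lemma interleave_map2 (h : R -> R -> R) (f1 f2 g1 g2 : nat -> R) (j : nat) :
  h (interleave f1 g1 j) (interleave f2 g2 j)
  = interleave (fun i => h (f1 i) (f2 i)) (fun i => h (g1 i) (g2 i)) j.
Proof. unfold interleave; destruct (Nat.even j); reflexivity. Qed.

Lemma null_set_sub (A B : R -> Prop) :
  null_set A -> (forall t, B t -> A t) -> null_set B.
Proof.
  intros HA Hsub eps Heps; destruct (HA eps Heps) as [a [b [Hab [Hcov Hsum]]]].
  exists a, b; split; [|split]; auto.
Qed.

Lemma null_set_union (A B : R -> Prop) :
  null_set A -> null_set B -> null_set (fun t => A t \/ B t).
Proof.
  intros HA HB eps Heps.
  destruct (HA (eps / 2) ltac:(lra)) as [a1 [b1 [Hab1 [Hcov1 Hsum1]]]].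
  destruct (HB (eps / 2) ltac:(lra)) as [a2 [b2 [Hab2 [Hcov2 Hsum2]]]].
  assert (Hlen : forall j, interleave b1 b2 j - interleave a1 a2 j
                   = interleave (fun i => b1 i - a1 i) (fun i => b2 i - a2 i) j)
    by (intro j; apply (interleave_map2 Rminus)).
  assert (Hnn : forall j, 0 <= interleave b1 b2 j - interleave a1 a2 j).
  { intro j; rewrite Hlen; unfold interleave; destruct (Nat.even j);
      [specialize (Hab1 (Nat.div2 j)) | specialize (Hab2 (Nat.div2 j))]; lra. }
  exists (interleave a1 a2), (interleave b1 b2); split; [|split].
  - intro j; specialize (Hnn j); lra.
  - intros t [Ht|Ht].
    + destruct (Hcov1 t Ht) as [j Hj]; exists (2 * j)%nat; rewrite !interleave_even; exact Hj.
    + destruct (Hcov2 t Ht) as [j Hj]; exists (2 * j + 1)%nat; rewrite !interleave_odd; exact Hj.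
  - intro N; eapply Rle_trans.
    + apply (sum_f_R0_mono_N _ N (2 * N + 1)); [exact Hnn | lia].
    + rewrite (sum_eq _ _ _ (fun j _ => Hlen j)), sum_interleave.
      specialize (Hsum1 N); specialize (Hsum2 N); lra.
Qed.

Lemma null_set_point (t0 : R) : null_set (fun t => t = t0).
Proof.
  intros eps Heps.
  set (a := fun j : nat => match j with O => t0 - eps / 4 | _ => 0 end).
  set (b := fun j : nat => match j with O => t0 + eps / 4 | _ => 0 end).
  exists a, b; split; [|split].
  - intros [|j]; unfold a, b; lra.
  - intros t ->; exists 0%nat; unfold a, b; lra.
  - intro N; enough (sum_f_R0 (fun j => b j - a j) N = eps / 2) by lra.
    induction N as [|N IH]; simpl in *; [unfold a, b; lra | rewrite IH; unfold a, b; lra].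
Qed.

Lemma ae_on_closed (L : R) (P : R -> Prop) :
  ae_on L P -> exists E, null_set E /\ forall t, 0 <= t <= L -> ~ E t -> P t.
Proof.
  intro HP; exists (fun t => t = 0 \/ t = L \/ (0 < t < L /\ ~ P t)); split.
  - apply null_set_union; [apply null_set_point|].
    apply null_set_union; [apply null_set_point | exact HP].
  - intros t Ht HE.
    assert (Hinterior : 0 < t < L) by (destruct (Req_dec t 0), (Req_dec t L); [tauto..|lra]).
    apply NNPP; tauto.
Qed.

Lemma ae_on_and (L : R) (P Q : R -> Prop) :
  ae_on L P -> ae_on L Q -> ae_on L (fun t => P t /\ Q t).
Proof.
  intros HP HQ; apply (null_set_sub _ _ (null_set_union _ _ HP HQ)).
  intros t [Ht HPQ]; apply not_and_or in HPQ; tauto.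
Qed.

Lemma derivative_secant_bound (g : R -> R) (x l m : R) :
  derivable_pt_lim g x l -> m < l ->
  exists del, 0 < del /\
    forall y z, x - del < y <= x -> x <= z < x + del -> m * (z - y) <= g z - g y.
Proof.
  intros Hg Hml; destruct (Hg (l - m) ltac:(lra)) as [del Hdel].
  assert (Hquot : forall h, h <> 0 -> Rabs h < del ->
            exists q, m < q /\ g (x + h) - g x = q * h).
  { intros h Hh0 Hh; exists ((g (x + h) - g x) / h); split.
    - destruct (Rabs_def2 _ _ (Hdel h Hh0 Hh)) as [_ Hq]; lra.
    - field; exact Hh0. }
  assert (Hright : forall z, x <= z < x + del -> m * (z - x) <= g z - g x).
  { intros z Hz; destruct (Req_dec z x) as [->|Hne]; [lra|].
    destruct (Hquot (z - x) ltac:(lra) ltac:(rewrite Rabs_right; lra)) as [q [Hq Heq]].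
    replace (x + (z - x)) with z in Heq by ring; rewrite Heq.
    apply Rmult_le_compat_r; lra. }
  assert (Hleft : forall y, x - del < y <= x -> m * (x - y) <= g x - g y).
  { intros y Hy; destruct (Req_dec y x) as [->|Hne]; [lra|].
    destruct (Hquot (y - x) ltac:(lra) ltac:(rewrite Rabs_left; lra)) as [q [Hq Heq]].
    replace (x + (y - x)) with y in Heq by ring.
    replace (g x - g y) with (q * (x - y)) by lra.
    apply Rmult_le_compat_r; lra. }
  exists (pos del); split; [apply cond_pos|].
  intros y z Hy Hz; specialize (Hright z Hz); specialize (Hleft y Hy); lra.
Qed.

Lemma real_induction (a b : R) (Q : R -> Prop) :
  a <= b -> Q a ->
  (forall x, a <= x < b -> Q x -> exists del, 0 < del /\ forall y, x < y < x + del -> Q y) ->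
  (forall x, a < x <= b -> (forall y, a <= y < x -> Q y) -> Q x) ->
  forall x, a <= x <= b -> Q x.
Proof.
  intros Hab HQa Hright Hleft.
  set (T := fun x => a <= x <= b /\ forall y, a <= y <= x -> Q y).
  assert (HTa : T a) by (split; [lra | intros y Hy; replace y with a by lra; exact HQa]).
  destruct (completeness T) as [s [Hub Hlub]].
  { exists b; intros x [Hx _]; lra. }
  { exists a; exact HTa. }
  assert (Has : a <= s) by (apply Hub; exact HTa).
  assert (Hsb : s <= b) by (apply Hlub; intros x [Hx _]; lra).
  assert (Hbelow : forall y, a <= y < s -> Q y).
  { intros y Hy; destruct (classic (exists x, T x /\ y < x)) as [[x [[_ Hx] Hyx]]|Hno].
    - apply Hx; lra.
    - enough (s <= y) by lra.
      apply Hlub; intros x Tx; apply Rnot_lt_le; intro Hyx; apply Hno; eauto. }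
  assert (HQs : Q s) by (destruct (Req_dec s a) as [->|]; [exact HQa | apply Hleft; [lra | exact Hbelow]]).
  assert (Hsb' : s = b).
  { destruct (Req_dec s b) as [|Hne]; [assumption|exfalso].
    destruct (Hright s ltac:(lra) HQs) as [del [Hdel Hnext]].
    set (z := Rmin (s + del / 2) b).
    assert (Hz : s < z <= s + del / 2 /\ z <= b)
      by (unfold z; repeat split; [apply Rmin_glb_lt; lra | apply Rmin_l | apply Rmin_r]).
    assert (HTz : T z).
    { split; [lra|]; intros y Hy.
      destruct (Rtotal_order y s) as [Hlt|[->|Hgt]]; [apply Hbelow | | apply Hnext]; auto; lra. }
    specialize (Hub z HTz); lra. }
  subst s; intros x Hx; destruct (Req_dec x b) as [->|]; [exact HQs | apply Hbelow; lra].
Qed.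

Definition overlap (lo hi a x : R) : R := Rmax 0 (Rmin hi x - Rmax lo a).

Lemma overlap_nonneg (lo hi a x : R) : 0 <= overlap lo hi a x.
Proof. apply Rmax_l. Qed.

Lemma overlap_mono (lo hi a x y : R) : x <= y -> overlap lo hi a x <= overlap lo hi a y.
Proof.
  intro Hxy; unfold overlap; apply Rle_max_compat_l.
  enough (Rmin hi x <= Rmin hi y) by lra.
  unfold Rmin; destruct (Rle_dec hi x), (Rle_dec hi y); lra.
Qed.

Lemma overlap_le (lo hi a x : R) : lo <= hi -> overlap lo hi a x <= hi - lo.
Proof.
  intro Hlh; unfold overlap; apply Rmax_lub; [lra|].
  pose proof (Rmin_l hi x); pose proof (Rmax_l lo a); lra.
Qed.

Lemma overlap_step (lo hi a x y : R) :
  lo <= x -> a <= x -> x <= y -> y <= hi -> overlap lo hi a y - overlap lo hi a x = y - x.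
Proof.
  intros Hlo Ha Hxy Hhi; unfold overlap.
  rewrite (Rmin_right hi x), (Rmin_right hi y) by lra.
  assert (Rmax lo a <= x) by (apply Rmax_lub; lra).
  rewrite (Rmax_right 0 (y - _)), (Rmax_right 0 (x - _)) by lra; ring.
Qed.

Definition covered_length (aa bb : nat -> R) (a : R) (N : nat) (x : R) : R :=
  sum_f_R0 (fun j => overlap (aa j) (bb j) a x) N.

Lemma covered_length_mono_N (aa bb : nat -> R) (a x : R) (N N' : nat) :
  (N <= N')%nat -> covered_length aa bb a N x <= covered_length aa bb a N' x.
Proof. intro; apply sum_f_R0_mono_N; [intro; apply overlap_nonneg | assumption]. Qed.

Lemma covered_length_mono (aa bb : nat -> R) (a x y : R) (N : nat) :
  x <= y -> covered_length aa bb a N x <= covered_length aa bb a N y.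
Proof. intro; apply sum_Rle; intros; apply overlap_mono; assumption. Qed.

Lemma covered_length_le (aa bb : nat -> R) (a x : R) (N : nat) :
  (forall j, aa j <= bb j) ->
  covered_length aa bb a N x <= sum_f_R0 (fun j => bb j - aa j) N.
Proof. intro; apply sum_Rle; intros; apply overlap_le; auto. Qed.

Lemma covered_length_step (aa bb : nat -> R) (a x y : R) (N j : nat) :
  (j <= N)%nat -> aa j <= x -> a <= x -> x <= y -> y <= bb j ->
  y - x <= covered_length aa bb a N y - covered_length aa bb a N x.
Proof.
  intros HjN Hlo Ha Hxy Hhi; unfold covered_length; rewrite <- minus_sum.
  rewrite <- (overlap_step (aa j) (bb j) a x y) by assumption.
  apply (sum_f_R0_term_le (fun i => overlap (aa i) (bb i) a y - overlap (aa i) (bb i) a x));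
    [intro i; pose proof (overlap_mono (aa i) (bb i) a x y Hxy); lra | exact HjN].
Qed.

(* A Lipschitz function whose derivative is at least c > 0 outside a null
   set grows at least at rate c/2.  Given a cover of the null set of total
   length eta, the potential
     g x - g a - c/2 (x - a) + (M + c) * (covered length of (a,x))
   stays nonnegative (for enough cover intervals) along [a,b] by real
   induction: off the cover g grows fast, on the cover the extra length
   term pays for the Lipschitz loss. *)
Section Growth.

Variables (g : R -> R) (E : R -> Prop) (a b c M : R).
Hypothesis Hab : a < b.
Hypothesis Hc : 0 < c.
Hypothesis HM : 0 <= M.
Hypothesis Hlip : forall s t, a <= s <= b -> a <= t <= b -> Rabs (g s - g t) <= M * Rabs (s - t).
Hypothesis Hder : forall t, a <= t <= b -> ~ E t -> exists l, derivable_pt_lim g t l /\ c <= l.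

Section Cover.

Variables aa bb : nat -> R.
Hypothesis Hcover : forall t, E t -> exists j, aa j < t < bb j.

Definition potential (N : nat) (x : R) : R :=
  g x - g a - c / 2 * (x - a) + (M + c) * covered_length aa bb a N x.

Definition reached (x : R) : Prop := exists N, 0 <= potential N x.

Lemma potential_mono_N (N N' : nat) (x : R) : (N <= N')%nat -> potential N x <= potential N' x.
Proof.
  intro HN; unfold potential; pose proof (covered_length_mono_N aa bb a x N N' HN).
  apply Rplus_le_compat_l, Rmult_le_compat_l; lra.
Qed.

Lemma potential_fast_growth (N : nat) (x y : R) :
  x <= y -> c / 2 * (y - x) <= g y - g x -> potential N x <= potential N y.
Proof.
  intros Hxy Hg; unfold potential; pose proof (covered_length_mono aa bb a x y N Hxy).
  assert ((M + c) * covered_length aa bb a N x <= (M + c) * covered_length aa bb a N y)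
    by (apply Rmult_le_compat_l; lra).
  lra.
Qed.

Lemma potential_covered (N j : nat) (x y : R) :
  (j <= N)%nat -> aa j <= x -> a <= x -> x <= y -> y <= bb j -> y <= b ->
  potential N x <= potential N y.
Proof.
  intros HjN Hlo Ha Hxy Hhi Hb; unfold potential.
  pose proof (covered_length_step aa bb a x y N j HjN Hlo Ha Hxy Hhi) as Hlen.
  assert (Hg : Rabs (g y - g x) <= M * Rabs (y - x)) by (apply Hlip; lra).
  rewrite (Rabs_right (y - x)) in Hg by lra.
  assert (- (M * (y - x)) <= g y - g x) by (pose proof (Rle_abs (- (g y - g x))); rewrite Rabs_Ropp in *; lra).
  nra.
Qed.

Lemma reached_start : reached a.
Proof.
  exists 0%nat; unfold potential; simpl.
  pose proof (overlap_nonneg (aa 0) (bb 0) a a); unfold covered_length; simpl; nra.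
Qed.

Lemma reached_right_step (x : R) :
  a <= x < b -> reached x -> exists del, 0 < del /\ forall y, x < y < x + del -> reached y.
Proof.
  intros Hx [N HN]; destruct (classic (E x)) as [Ex|nEx].
  - destruct (Hcover x Ex) as [j Hj].
    exists (Rmin (bb j - x) (b - x)); split; [apply Rmin_glb_lt; lra|].
    intros y Hy; pose proof (Rmin_l (bb j - x) (b - x)); pose proof (Rmin_r (bb j - x) (b - x)).
    exists (Nat.max N j).
    pose proof (potential_mono_N N (Nat.max N j) x ltac:(lia)).
    pose proof (potential_covered (Nat.max N j) j x y ltac:(lia) ltac:(lra) ltac:(lra) ltac:(lra)
                  ltac:(lra) ltac:(lra)).
    lra.
  - destruct (Hder x ltac:(lra) nEx) as [l [Hl Hcl]].
    destruct (derivative_secant_bound g x l (c / 2) Hl ltac:(lra)) as [del [Hdel Hsec]].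
    exists (Rmin del (b - x)); split; [apply Rmin_glb_lt; lra|].
    intros y Hy; pose proof (Rmin_l del (b - x)); exists N.
    pose proof (potential_fast_growth N x y ltac:(lra) (Hsec x y ltac:(lra) ltac:(lra))); lra.
Qed.

Lemma reached_left_limit (x : R) :
  a < x <= b -> (forall y, a <= y < x -> reached y) -> reached x.
Proof.
  intros Hx Hbelow; destruct (classic (E x)) as [Ex|nEx].
  - destruct (Hcover x Ex) as [j Hj].
    pose proof (Rmax_l (aa j) a); pose proof (Rmax_r (aa j) a).
    assert (Hm : Rmax (aa j) a < x) by (apply Rmax_lub_lt; lra).
    set (y := (Rmax (aa j) a + x) / 2).
    destruct (Hbelow y ltac:(unfold y; lra)) as [N HN]; exists (Nat.max N j).
    pose proof (potential_mono_N N (Nat.max N j) y ltac:(lia)).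
    pose proof (potential_covered (Nat.max N j) j y x ltac:(lia) ltac:(unfold y; lra)
                  ltac:(unfold y; lra) ltac:(unfold y; lra) ltac:(lra) ltac:(lra)).
    lra.
  - destruct (Hder x ltac:(lra) nEx) as [l [Hl Hcl]].
    destruct (derivative_secant_bound g x l (c / 2) Hl ltac:(lra)) as [del [Hdel Hsec]].
    set (y := x - Rmin (del / 2) ((x - a) / 2)).
    assert (Hy : x - del < y < x /\ a <= y).
    { pose proof (Rmin_l (del / 2) ((x - a) / 2)); pose proof (Rmin_r (del / 2) ((x - a) / 2)).
      assert (0 < Rmin (del / 2) ((x - a) / 2)) by (apply Rmin_glb_lt; lra).
      unfold y; lra. }
    destruct (Hbelow y ltac:(lra)) as [N HN]; exists N.
    pose proof (potential_fast_growth N y x ltac:(lra) (Hsec y x ltac:(lra) ltac:(lra))); lra.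
Qed.

Lemma reached_end : reached b.
Proof.
  apply (real_induction a b reached); try lra.
  - exact reached_start.
  - exact reached_right_step.
  - exact reached_left_limit.
Qed.

End Cover.

Lemma growth_up_to_cover (eta : R) :
  null_set E -> 0 < eta -> c / 2 * (b - a) - (M + c) * eta <= g b - g a.
Proof.
  intros HE Heta; destruct (HE eta Heta) as [aa [bb [Hord [Hcover Hsum]]]].
  destruct (reached_end aa bb Hcover) as [N HN]; unfold potential in HN.
  pose proof (Rle_trans _ _ _ (covered_length_le aa bb a b N Hord) (Hsum N)).
  nra.
Qed.

Lemma lipschitz_growth : null_set E -> c / 2 * (b - a) <= g b - g a.
Proof.
  intro HE; apply Rnot_lt_le; intro Hlt.
  set (eta := (c / 2 * (b - a) - (g b - g a)) / (2 * (M + c))).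
  assert (Heta : 0 < eta) by (unfold eta; apply Rdiv_lt_0_compat; lra).
  pose proof (growth_up_to_cover eta HE Heta).
  assert ((M + c) * eta = (c / 2 * (b - a) - (g b - g a)) / 2) by (unfold eta; field; lra).
  lra.
Qed.

End Growth.

Lemma lipschitz_strictly_increasing (g : R -> R) (E : R -> Prop) (a b c M : R) :
  a < b -> 0 < c -> 0 <= M -> null_set E ->
  (forall s t, a <= s <= b -> a <= t <= b -> Rabs (g s - g t) <= M * Rabs (s - t)) ->
  (forall t, a <= t <= b -> ~ E t -> exists l, derivable_pt_lim g t l /\ c <= l) ->
  g a < g b.
Proof.
  intros Hab Hc HM HE Hlip Hder.
  pose proof (lipschitz_growth g E a b c M Hab Hc HM Hlip Hder HE); nra.
Qed.

Lemma vsum_ext (n : nat) (f h : nat -> R) :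
  (forall i, (i < n)%nat -> f i = h i) -> vsum n f = vsum n h.
Proof.
  induction n as [|n IH]; intro H; simpl; [reflexivity|].
  rewrite IH, (H n); [reflexivity | lia | intros i Hi; apply H; lia].
Qed.

Lemma vsum_scal (n : nat) (c : R) (f : nat -> R) : vsum n (fun i => c * f i) = c * vsum n f.
Proof. induction n as [|n IH]; simpl; [ring | rewrite IH; ring]. Qed.

Lemma vsum_minus (n : nat) (f h : nat -> R) : vsum n f - vsum n h = vsum n (fun i => f i - h i).
Proof. induction n as [|n IH]; simpl; [ring | rewrite <- IH; ring]. Qed.

Lemma vsum_abs (n : nat) (f : nat -> R) : Rabs (vsum n f) <= vsum n (fun i => Rabs (f i)).
Proof.
  induction n as [|n IH]; simpl; [rewrite Rabs_R0; lra|].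
  eapply Rle_trans; [apply Rabs_triang | lra].
Qed.

Lemma vsum_bound (n : nat) (f : nat -> R) (B : R) :
  (forall i, (i < n)%nat -> f i <= B) -> vsum n f <= INR n * B.
Proof.
  induction n as [|n IH]; intro H; simpl vsum; [simpl; lra|].
  rewrite S_INR; specialize (IH (fun i Hi => H i ltac:(lia))); specialize (H n ltac:(lia)); lra.
Qed.

Lemma vsum_term (n : nat) (f : nat -> R) (j : nat) :
  (forall i, (i < n)%nat -> 0 <= f i) -> (j < n)%nat -> f j <= vsum n f.
Proof.
  assert (Hnn : forall m, (forall i, (i < m)%nat -> 0 <= f i) -> 0 <= vsum m f).
  { induction m as [|m IH]; intro H; simpl; [lra|].
    specialize (IH (fun i Hi => H i ltac:(lia))); specialize (H m ltac:(lia)); lra. }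
  induction n as [|n IH]; intros H Hj; simpl; [lia|].
  destruct (Nat.eq_dec j n) as [->|Hne].
  - pose proof (Hnn n (fun i Hi => H i ltac:(lia))); lra.
  - specialize (IH (fun i Hi => H i ltac:(lia)) ltac:(lia)); specialize (H n ltac:(lia)); lra.
Qed.

Lemma dot_sub_r (n : nat) (x y z : Vec) :
  dot n x y - dot n x z = dot n x (fun i => y i - z i).
Proof. unfold dot; rewrite vsum_minus; apply vsum_ext; intros; ring. Qed.

Lemma dot_abs_bound (n : nat) (x y : Vec) (A B : R) :
  (forall j, (j < n)%nat -> Rabs (x j) <= A) -> (forall j, (j < n)%nat -> Rabs (y j) <= B) ->
  0 <= B -> Rabs (dot n x y) <= INR n * (A * B).
Proof.
  intros Hx Hy HB; unfold dot; eapply Rle_trans; [apply vsum_abs|].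
  apply vsum_bound; intros j Hj; rewrite Rabs_mult.
  specialize (Hx j Hj); specialize (Hy j Hj).
  pose proof (Rabs_pos (x j)); pose proof (Rabs_pos (y j)); nra.
Qed.

Lemma comp_sq_le_dot (n : nat) (x : Vec) (j : nat) : (j < n)%nat -> x j * x j <= dot n x x.
Proof. intro Hj; apply (vsum_term n (fun i => x i * x i)); [intros; nra | exact Hj]. Qed.

Lemma dot_self_nonneg (n : nat) (x : Vec) : 0 <= dot n x x.
Proof.
  destruct n as [|n]; [unfold dot; simpl; lra|].
  pose proof (comp_sq_le_dot (S n) x 0 ltac:(lia)); nra.
Qed.

Lemma comp_le_vnorm (n : nat) (x : Vec) (j : nat) : (j < n)%nat -> Rabs (x j) <= vnorm n x.
Proof.
  intro Hj; unfold vnorm; rewrite <- sqrt_Rsqr_abs.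
  apply sqrt_le_1_alt; unfold Rsqr; apply comp_sq_le_dot; exact Hj.
Qed.

Lemma vnorm_zero_comp (n : nat) (x : Vec) : vnorm n x <= 0 -> forall j, (j < n)%nat -> x j = 0.
Proof.
  intros H j Hj; pose proof (comp_le_vnorm n x j Hj); pose proof (Rabs_pos (x j)).
  destruct (Req_dec (x j) 0) as [|Hne]; [assumption|].
  pose proof (Rabs_pos_lt _ Hne); lra.
Qed.

Lemma sphere_dot_self (n : nat) (x : Vec) : on_sphere n x -> dot n x x = 1.
Proof.
  unfold on_sphere, vnorm; intro H.
  rewrite <- (sqrt_sqrt (dot n x x)) by apply dot_self_nonneg; rewrite H; ring.
Qed.

Lemma sphere_comp_bound (n : nat) (x : Vec) (j : nat) :
  on_sphere n x -> (j < n)%nat -> Rabs (x j) <= 1.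
Proof. intros H Hj; rewrite <- H; apply comp_le_vnorm; exact Hj. Qed.

Definition tangential (n : nat) (lam x : Vec) : Vec := fun i => lam i - dot n lam x * x i.

Lemma tangential_nonzero (n : nat) (lam x : Vec) :
  on_sphere n lam -> on_sphere n x -> vec_neq n x lam -> vec_neq n x (fun i => - lam i) ->
  exists i, (i < n)%nat /\ tangential n lam x i <> 0.
Proof.
  intros Hlam Hx Hne1 Hne2; set (D := dot n lam x).
  apply NNPP; intro Hno.
  assert (Hpar : forall j, (j < n)%nat -> lam j = D * x j).
  { intros j Hj; apply NNPP; intro Hj'; apply Hno; exists j; split; [exact Hj|].
    unfold tangential; fold D; lra. }
  assert (Hsq : 1 = D * D).
  { rewrite <- (sphere_dot_self n lam Hlam), <- (Rmult_1_r (D * D)), <- (sphere_dot_self n x Hx).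
    unfold dot; rewrite <- vsum_scal; apply vsum_ext; intros j Hj; rewrite Hpar by exact Hj; ring. }
  destruct (Rmult_integral (D - 1) (D + 1) ltac:(nra)) as [HD|HD].
  - destruct Hne1 as [j [Hj Hj']]; apply Hj'; rewrite Hpar by exact Hj; replace D with 1 by lra; ring.
  - destruct Hne2 as [j [Hj Hj']]; apply Hj'; rewrite Hpar by exact Hj; replace D with (-1) by lra; ring.
Qed.

Lemma tangential_lipschitz (n : nat) (lam x y : Vec) (r : R) (i : nat) :
  on_sphere n lam -> on_sphere n x -> on_sphere n y -> (i < n)%nat -> 0 <= r ->
  (forall j, (j < n)%nat -> Rabs (x j - y j) <= r) ->
  Rabs (tangential n lam x i - tangential n lam y i) <= 2 * INR n * r.
Proof.
  intros Hlam Hx Hy Hi Hr Hxy; unfold tangential.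
  assert (Hdiff : Rabs (dot n lam x - dot n lam y) <= INR n * (1 * r))
    by (rewrite dot_sub_r; apply dot_abs_bound; auto; intros; apply (sphere_comp_bound n); auto).
  assert (Hdy : Rabs (dot n lam y) <= INR n * (1 * 1))
    by (apply dot_abs_bound; try lra; intros; apply (sphere_comp_bound n); auto).
  pose proof (sphere_comp_bound n x i Hx Hi); pose proof (Hxy i Hi).
  replace (lam i - dot n lam x * x i - (lam i - dot n lam y * y i))
    with (- ((dot n lam x - dot n lam y) * x i + dot n lam y * (x i - y i))) by ring.
  rewrite Rabs_Ropp; eapply Rle_trans; [apply Rabs_triang|]; rewrite !Rabs_mult.
  pose proof (Rabs_pos (x i)); pose proof (Rabs_pos (x i - y i));
  pose proof (Rabs_pos (dot n lam x - dot n lam y)); pose proof (Rabs_pos (dot n lam y)).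
  pose proof (pos_INR n); nra.
Qed.

Lemma lipschitz_on_nonneg (n : nat) (L : R) (x : R -> Vec) :
  lipschitz_on n L x -> exists M, 0 <= M /\
    forall s t j, 0 <= s <= L -> 0 <= t <= L -> (j < n)%nat ->
      Rabs (x s j - x t j) <= M * Rabs (s - t).
Proof.
  intros [M HM]; exists (Rabs M); split; [apply Rabs_pos|].
  intros s t j Hs Ht Hj; eapply Rle_trans; [apply HM; auto|].
  apply Rmult_le_compat_r; [apply Rabs_pos | apply Rle_abs].
Qed.

Lemma positive_lower_bound (L : R) (beta : R -> R) :
  0 <= L -> (forall t, 0 <= t <= L -> 0 < beta t) ->
  (exists C, forall t, 0 <= t <= L -> / beta t <= C) ->
  exists b0, 0 < b0 /\ forall t, 0 <= t <= L -> b0 <= beta t.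
Proof.
  intros HL Hpos [C HC].
  assert (HC0 : 0 < C) by (pose proof (Rinv_0_lt_compat _ (Hpos 0 ltac:(lra))); specialize (HC 0 ltac:(lra)); lra).
  exists (/ C); split; [apply Rinv_0_lt_compat; exact HC0|].
  intros t Ht; rewrite <- (Rinv_inv (beta t)).
  apply Rinv_le_contravar; [apply Rinv_0_lt_compat, Hpos | apply HC]; exact Ht.
Qed.

Lemma linear_bound_small (A e : R) :
  0 <= A -> 0 < e -> exists del, 0 < del /\ forall r, 0 <= r < del -> A * r <= e.
Proof.
  intros HA He; exists (e / (A + 1)); split; [apply Rdiv_lt_0_compat; lra|].
  intros r Hr; assert (Hr' : r * (A + 1) <= e / (A + 1) * (A + 1))
    by (apply Rmult_le_compat_r; lra).
  replace (e / (A + 1) * (A + 1)) with e in Hr' by (field; lra); nra.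
Qed.

Lemma u_zero_off_Omega (n : nat) (L k : R) (u : R -> Vec) (t : R) :
  0 < k -> 0 <= t <= L -> ~ Omega n L k u t -> forall j, (j < n)%nat -> u t j = 0.
Proof.
  intros Hk Ht HnO; apply vnorm_zero_comp; apply Rnot_lt_le; intro Hpos.
  apply HnO; split; [exact Ht|]; unfold f_of; apply Rmult_lt_0_compat; assumption.
Qed.

Section Isolation.

Variables (n : nat) (L : R) (beta : R -> R) (tau dtau u du : R -> Vec) (lam : Vec).
Variables (k b0 Mt Mu t0 : R) (i : nat).
Hypothesis Hb0 : 0 < b0.
Hypothesis Hbeta : forall t, 0 <= t <= L -> b0 <= beta t.
Hypothesis HMt : 0 <= Mt.
Hypothesis Htau_lip : forall s t j, 0 <= s <= L -> 0 <= t <= L -> (j < n)%nat ->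
  Rabs (tau s j - tau t j) <= Mt * Rabs (s - t).
Hypothesis Htau_sph : forall t, 0 <= t <= L -> on_sphere n (tau t).
Hypothesis Hlam : on_sphere n lam.
Hypothesis HMu : 0 <= Mu.
Hypothesis Hu_lip : forall s t j, 0 <= s <= L -> 0 <= t <= L -> (j < n)%nat ->
  Rabs (u s j - u t j) <= Mu * Rabs (s - t).
Hypothesis Hk : 0 <= k.
Hypothesis Ht0 : 0 <= t0 <= L.
Hypothesis Hu0 : forall j, (j < n)%nat -> u t0 j = 0.
Hypothesis Hi : (i < n)%nat.
Hypothesis Hw : tangential n lam (tau t0) i <> 0.

Definition regular_point (t : R) : Prop :=
  vderiv_at n u t (du t) /\
  (forall j, (j < n)%nat ->
     du t j + dot n (u t) (dtau t) * tau t j = beta t * tangential n lam (tau t) j) /\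
  vnorm n (dtau t) <= k.

Hypothesis Hae : ae_on L regular_point.

Let w := tangential n lam (tau t0) i.

Lemma tangential_near (t : R) :
  0 <= t <= L -> 2 * INR n * Mt * Rabs (t - t0) <= Rabs w / 2 ->
  w * w / 2 <= w * tangential n lam (tau t) i.
Proof.
  intros Ht Hsmall.
  assert (Hdev : Rabs (tangential n lam (tau t) i - w) <= 2 * INR n * (Mt * Rabs (t - t0))).
  { apply (tangential_lipschitz n lam (tau t) (tau t0) (Mt * Rabs (t - t0)) i Hlam
             (Htau_sph t Ht) (Htau_sph t0 Ht0) Hi).
    - pose proof (Rabs_pos (t - t0)); nra.
    - intros j Hj; apply Htau_lip; auto. }
  assert (Hww : Rabs w * Rabs w = w * w) by (rewrite <- Rabs_mult; apply Rabs_right; nra).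
  pose proof (Rle_abs (- (w * (tangential n lam (tau t) i - w)))).
  rewrite Rabs_Ropp, Rabs_mult in *.
  pose proof (Rabs_pos w); nra.
Qed.

Lemma coupling_near (t : R) :
  0 <= t <= L -> vnorm n (dtau t) <= k ->
  Rabs (dot n (u t) (dtau t)) <= INR n * Mu * k * Rabs (t - t0).
Proof.
  intros Ht Hdk.
  replace (INR n * Mu * k * Rabs (t - t0)) with (INR n * (Mu * Rabs (t - t0) * k)) by ring.
  apply dot_abs_bound; [| |exact Hk].
  - intros j Hj; replace (u t j) with (u t j - u t0 j) by (rewrite Hu0; [ring | exact Hj]).
    apply Hu_lip; auto.
  - intros j Hj; eapply Rle_trans; [apply comp_le_vnorm; exact Hj | exact Hdk].
Qed.

Lemma scaled_derivative_near (t : R) :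
  0 <= t <= L -> regular_point t ->
  2 * INR n * Mt * Rabs (t - t0) <= Rabs w / 2 ->
  INR n * Mu * k * Rabs (t - t0) <= b0 * Rabs w / 4 ->
  b0 * (w * w) / 4 <= w * du t i.
Proof.
  intros Ht [_ [Hode Hdk]] Htan Hcoup.
  pose proof (tangential_near t Ht Htan) as HT.
  pose proof (coupling_near t Ht Hdk) as HP.
  pose proof (sphere_comp_bound n (tau t) i (Htau_sph t Ht) Hi) as Htau.
  pose proof (Hbeta t Ht) as Hb.
  set (P := dot n (u t) (dtau t)) in *; set (T := tangential n lam (tau t) i) in *.
  assert (Hdu : w * du t i = beta t * (w * T) - P * (w * tau t i))
    by (replace (du t i) with (beta t * T - P * tau t i) by (specialize (Hode i Hi); fold P T in Hode; lra); ring).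
  assert (Hww : Rabs w * Rabs w = w * w) by (rewrite <- Rabs_mult; apply Rabs_right; nra).
  assert (Hcross : Rabs (P * (w * tau t i)) <= b0 * (w * w) / 4).
  { rewrite !Rabs_mult; pose proof (Rabs_pos P); pose proof (Rabs_pos w); pose proof (Rabs_pos (tau t i)).
    assert (Rabs P <= b0 * Rabs w / 4) by lra.
    apply Rle_trans with (Rabs P * (Rabs w * 1)); [apply Rmult_le_compat_l; nra|].
    rewrite <- Hww; nra. }
  pose proof (Rle_abs (P * (w * tau t i))).
  assert (b0 * (w * w / 2) <= beta t * (w * T)) by (apply Rmult_le_compat; nra).
  lra.
Qed.

Lemma component_monotone_near :
  exists del, 0 < del /\ forall s t, 0 <= s -> s < t -> t <= L ->
    Rabs (s - t0) < del -> Rabs (t - t0) < del -> w * u s i < w * u t i.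
Proof.
  assert (Hwpos : 0 < Rabs w) by (apply Rabs_pos_lt; exact Hw).
  pose proof (pos_INR n) as Hn.
  destruct (linear_bound_small (2 * INR n * Mt) (Rabs w / 2)) as [del1 [Hdel1 Hsmall1]]; [nra | lra |].
  destruct (linear_bound_small (INR n * Mu * k) (b0 * Rabs w / 4)) as [del2 [Hdel2 Hsmall2]];
    [apply Rmult_le_pos; nra | nra |].
  destruct (ae_on_closed L regular_point Hae) as [E [HE Hreg]].
  exists (Rmin del1 del2); split; [apply Rmin_glb_lt; assumption|].
  pose proof (Rmin_l del1 del2); pose proof (Rmin_r del1 del2).
  intros s t Hs Hst Ht Hs0 Ht0'.
  apply (lipschitz_strictly_increasing (fun r => w * u r i) E s t (b0 * (w * w) / 4) (Rabs w * Mu));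
    [exact Hst | pose proof (Rsqr_pos_lt w Hw); unfold Rsqr in *; nra
    | pose proof (Rabs_pos w); nra | exact HE | |].
  - intros r r' Hr Hr'; rewrite <- Rmult_minus_distr_l, Rabs_mult, Rmult_assoc.
    apply Rmult_le_compat_l; [apply Rabs_pos | apply Hu_lip; auto; lra].
  - intros r Hr HnE.
    assert (Hr0 : Rabs (r - t0) < Rmin del1 del2).
    { apply Rabs_def2 in Hs0; apply Rabs_def2 in Ht0'; apply Rabs_def1; lra. }
    pose proof (Hreg r ltac:(lra) HnE) as Hrr; exists (w * du r i); split.
    + apply derivable_pt_lim_scal, (proj1 Hrr); exact Hi.
    + apply scaled_derivative_near; [lra | exact Hrr | |];
        [apply Hsmall1 | apply Hsmall2]; split; [apply Rabs_pos | lra | apply Rabs_pos | lra].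
Qed.

End Isolation.

Theorem mainTheorem15
  (n : nat) (L : R) (beta : R -> R) (tau dtau u du : R -> Vec) (lam : Vec) (k : R)
  (Hn : (2 <= n)%nat)
  (HL : 0 < L)
  (Hbeta_pos : forall t, 0 <= t <= L -> 0 < beta t)
  (Hbeta_bv : bounded_variation L beta)
  (Hbeta_inv : exists C, forall t, 0 <= t <= L -> / beta t <= C)
  (Htau_lip : lipschitz_on n L tau)
  (Htau_sph : forall t, 0 <= t <= L -> on_sphere n (tau t))
  (Hdtau : ae_on L (fun t => vderiv_at n tau t (dtau t)))
  (Hk : is_ess_sup L (fun t => vnorm n (dtau t)) k)
  (Hkpos : 0 < k)
  (Hlam : on_sphere n lam)
  (Hu_lip : lipschitz_on n L u)
  (Hu_nz : exists t i, 0 <= t <= L /\ (i < n)%nat /\ u t i <> 0)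
  (Hdu : ae_on L (fun t => vderiv_at n u t (du t)))
  (Hode : ae_on L (fun t => forall i, (i < n)%nat ->
      du t i + dot n (u t) (dtau t) * tau t i
      = beta t * (lam i - dot n lam (tau t) * tau t i)))
  (Halign : ae_on L (fun t => forall i, (i < n)%nat ->
      vnorm n (u t) * dtau t i = k * u t i))
  (Hdep : forall t, Omega n L k u t ->
      forall D, vderiv_within n L tau t D -> lin_dep3 n (tau t) D lam) :
  discrete_set (fun t => Omega' n L k tau u lam t /\ ~ Omega n L k u t).
Proof.
  destruct (lipschitz_on_nonneg n L tau Htau_lip) as [Mt [HMt Htau]].
  destruct (lipschitz_on_nonneg n L u Hu_lip) as [Mu [HMu Hu]].
  destruct (positive_lower_bound L beta ltac:(lra) Hbeta_pos Hbeta_inv) as [b0 [Hb0 Hbeta]].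
  assert (Hae : ae_on L (regular_point n beta tau dtau u du lam k))
    by exact (ae_on_and _ _ _ Hdu (ae_on_and _ _ _ Hode (proj1 Hk))).
  intros t0 [[[Ht0 [Hne1 Hne2]] | HO] HnO]; [|contradiction].
  pose proof (u_zero_off_Omega n L k u t0 Hkpos Ht0 HnO) as Hu0.
  destruct (tangential_nonzero n lam (tau t0) Hlam (Htau_sph t0 Ht0) Hne1 Hne2) as [i [Hi Hw]].
  destruct (component_monotone_near n L beta tau dtau u du lam k b0 Mt Mu t0 i
              Hb0 Hbeta HMt Htau Htau_sph Hlam HMu Hu ltac:(lra) Ht0 Hu0 Hi Hw Hae)
    as [del [Hdel Hmono]].
  exists del; split; [exact Hdel|].
  intros s [[[Hs _] | HOs] HnOs] Hsd; [|contradiction].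
  pose proof (u_zero_off_Omega n L k u s Hkpos Hs HnOs i Hi) as Hus.
  assert (Hd0 : Rabs (t0 - t0) < del) by (rewrite Rminus_diag, Rabs_R0; exact Hdel).
  destruct (Rtotal_order s t0) as [Hlt|[Heq|Hgt]]; [| exact Heq |].
  - pose proof (Hmono s t0 ltac:(lra) Hlt ltac:(lra) Hsd Hd0) as Hlt'.
    rewrite Hus, (Hu0 i Hi) in Hlt'; lra.
  - pose proof (Hmono t0 s ltac:(lra) Hgt ltac:(lra) Hd0 Hsd) as Hgt'.
    rewrite Hus, (Hu0 i Hi) in Hgt'; lra.
Qed.
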